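(* Let $\mathcal M$ be an $\aleph_1$-saturated structure. Then $\mathcal M$ is unstable if and only if $\mathcal M$ trace defines $(\mathbb Q,<)$, and $\mathcal M$ has the independence property (IP, i.e. is not NIP) if and only if $\mathcal M$ trace defines the random graph.
   Context: The random graph is the Fraïssé limit of the class of finite symmetric irreflexive graphs, viewed as a structure $(V,E)$ with one binary relation. ''Definable'' means definable with parameters. For structures $\mathcal M,\mathcal O$ and an injection $\tau:O\to M^m$, $\mathcal M$ trace defines $\mathcal O$ via $\tau$ if for every $n$ and every $\mathcal O$-definable $X\subseteq O^n$ there is an $\mathcal M$-definable $Y\subseteq M^{mn}$ with $X=\{(a_1,\dots,a_n)\in O^n:(\tau(a_1),\dots,\tau(a_n))\in Y\}$; $\mathcal M$ trace defines $\mathcal O$ if it does so via some injection $\tau:O\to M^m$ for some $m$. *)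

From Stdlib Require List.
From mathcomp Require Import all_boot all_order all_algebra.
Set Implicit Arguments. Unset Strict Implicit. Unset Printing Implicit Defensive.
Import Order.TTheory GRing.Theory Num.Theory.

(* A first-order signature: relation and function symbols with arities
   (constants are 0-ary function symbols). *)
Record signature := Signature {
  rsym : Type; rar : rsym -> nat;
  fsym : Type; far : fsym -> nat }.

Record structure (L : signature) := Structure {
  carrier :> Type;
  rinterp : forall r : rsym L, ('I_(rar r) -> carrier) -> Prop;
  finterp : forall f : fsym L, ('I_(far f) -> carrier) -> carrier }.

Inductive term (L : signature) : Type :=
| tvar : nat -> term L
| tapp : forall f : fsym L, ('I_(far f) -> term L) -> term L.

Inductive formula (L : signature) : Type :=
| feq : term L -> term L -> formula L
| frel : forall r : rsym L, ('I_(rar r) -> term L) -> formula L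
| fneg : formula L -> formula L
| fand : formula L -> formula L -> formula L
| fex : nat -> formula L -> formula L.

Section Semantics.
Variables (L : signature) (M : structure L).

Fixpoint teval (v : nat -> M) (t : term L) : M :=
  match t with
  | tvar n => v n
  | tapp f ts => @finterp L M f (fun i => teval v (ts i))
  end.

Definition upd (v : nat -> M) (n : nat) (c : M) : nat -> M :=
  fun k => if k == n then c else v k.

Fixpoint sat (v : nat -> M) (phi : formula L) : Prop :=
  match phi with
  | feq t1 t2 => teval v t1 = teval v t2
  | frel r ts => @rinterp L M r (fun i => teval v (ts i))
  | fneg p => ~ sat v p
  | fand p q => sat v p /\ sat v q
  | fex n p => exists c : M, sat (upd v n c) p
  end.

Definition tval (n : nat) (a : 'I_n -> M) (v : nat -> M) : nat -> M :=
  fun k => match (insub k : option 'I_n) with Some i => a i | None => v k end.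

(* variables 0..p-1 <- x, p..p+q-1 <- y, others <- v *)
Definition pval (p q : nat) (x : 'I_p -> M) (y : 'I_q -> M) (v : nat -> M)
  : nat -> M :=
  tval x (fun k => tval y (fun l => v (l + p)) (k - p)).

(* X, a set of I-indexed tuples (I a finite index type, i.e. M^|I|), is
   definable with parameters: the coordinates are named by the variables
   0..|I|-1 (via the enumeration of I), all other free variables of the
   formula are parameters from M. *)
Definition DefinableI (I : finType) (X : (I -> M) -> Prop) : Prop :=
  exists (phi : formula L) (v : nat -> M),
    forall a : I -> M,
      X a <-> sat (tval (fun i : 'I_#|I| => a (enum_val i)) v) phi.

(* aleph_1-saturation: every finitely satisfiable set of formulas in the
   free variable 0 with parameters from a countable set {b_k} (variable
   k.+1 is interpreted by b k) is realized. *)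
Definition pv (b : nat -> M) (c : M) : nat -> M :=
  fun k => match k with 0 => c | k'.+1 => b k' end.

Definition aleph1_saturated : Prop :=
  forall (b : nat -> M) (P : formula L -> Prop),
    (forall s : list (formula L), (forall phi, List.In phi s -> P phi) ->
       exists c : M, forall phi, List.In phi s -> sat (pv b c) phi) ->
    exists c : M, forall phi, P phi -> sat (pv b c) phi.

(* Th(M) is unstable: some formula phi(x;y) has the order property,
   i.e. for every N there are a_0..a_{N-1}, b_0..b_{N-1} with
   phi(a_i,b_j) <-> i < j.  (The remaining free variables of phi are
   existentially assigned, which amounts to enlarging the tuple y.) *)
Definition unstable : Prop :=
  exists (phi : formula L) (p q : nat),
    forall N : nat, exists (v : nat -> M) (a : 'I_N -> 'I_p -> M)
                           (b : 'I_N -> 'I_q -> M),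
      forall i j : 'I_N, sat (pval (a i) (b j) v) phi <-> (i < j)%N.

Definition has_IP : Prop :=
  exists (phi : formula L) (p q : nat),
    forall N : nat, exists (v : nat -> M) (a : 'I_N -> 'I_p -> M)
                           (b : {set 'I_N} -> 'I_q -> M),
      forall (i : 'I_N) (S : {set 'I_N}), sat (pval (a i) (b S) v) phi <-> i \in S.

End Semantics.

Definition trace_defines_via (L L' : signature) (M : structure L)
  (O : structure L') (m : nat) (tau : O -> 'I_m -> M) : Prop :=
  (forall a b : O, (forall j, tau a j = tau b j) -> a = b) /\
  forall (n : nat) (X : ('I_n -> O) -> Prop),
    @DefinableI L' O _ X ->
    exists Y : ('I_n * 'I_m -> M) -> Prop,
      @DefinableI L M _ Y /\
      forall a : 'I_n -> O, X a <-> Y (fun p => tau (a p.1) p.2).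

Definition trace_defines (L L' : signature) (M : structure L)
  (O : structure L') : Prop :=
  exists (m : nat) (tau : O -> 'I_m -> M), @trace_defines_via L L' M O m tau.

Definition binsig : signature :=
  @Signature unit (fun _ => 2%N) void (fun f => match f with end).

Definition QLt : structure binsig :=
  @Structure binsig rat (fun _ a => (a ord0 < a ord_max)%R)
    (fun f => match f with end).

(* The random (Rado) graph on nat: x ~ y iff x <> y and the x-th binary
   digit of y or the y-th binary digit of x is 1. *)
Definition rado_edge (x y : nat) : Prop :=
  x <> y /\ (Nat.testbit y x = true \/ Nat.testbit x y = true).

Definition RandomGraph : structure binsig :=
  @Structure binsig nat (fun _ a => rado_edge (a ord0) (a ord_max))
    (fun f => match f with end).

From Pilot Require Import Defs.
From Stdlib Require Import PeanoNat ClassicalEpsilon.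
From mathcomp Require Import all_boot all_order all_algebra zify lra boolp.
Set Implicit Arguments. Unset Strict Implicit. Unset Printing Implicit Defensive.
Import Order.TTheory GRing.Theory Num.Theory.

(* If phi(x; y) has the order property (resp. the independence property),
   aleph_1-saturation realizes, in the countably many variables of one type,
   tuples a_r (r in Q, resp. r in N), which also carry the parameters, with
   phi(a_r; a_s) iff r < s (resp. iff bit r of s is 1); from the latter the
   Rado edge relation is definable on these tuples.  Both (Q,<) and the
   random graph extend finite partial isomorphisms, so the truth of a formula
   only depends on the quantifier-free type of its variables; an O-definable
   set is thus a finite union of quantifier-free types, and pulling these back
   along r |-> a_r gives the trace definition.  Conversely a trace definition
   pulls < (resp. the edge relation) back to a formula of M, which has the
   order property (resp. IP) because Q contains chains of every length and
   the random graph realizes every subset of a finite set as a neighbourhood. *)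

Lemma In_mem (T : eqType) (x : T) (s : seq T) : List.In x s <-> x \in s.
Proof.
elim: s => [|y s IH] //=; rewrite in_cons IH.
by split=> [[->|->]|/orP[/eqP->|]]; rewrite ?eqxx ?orbT; auto.
Qed.

Lemma In_map_choice (A B : Type) (f : A -> B) (P : A -> Prop) (bs : list B) :
  (forall b, List.In b bs -> exists2 a, P a & b = f a) ->
  exists2 s, bs = List.map f s & forall a, List.In a s -> P a.
Proof.
elim: bs => [|b bs IH] fbs; first by exists nil.
have [a Pa ->] := fbs b (List.in_eq _ _).
have [s -> Ps] := IH (fun b' bs_b' => fbs b' (List.in_cons _ _ _ bs_b')).
by exists (a :: s) => // a' [<-|/Ps].
Qed.

(** * Syntax and satisfaction *)

Section Syntax.
Variable L : signature.

Fixpoint tvar_bound (t : term L) : nat :=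
  match t with
  | tvar n => n.+1
  | tapp f ts => \max_(i < far f) tvar_bound (ts i)
  end.

Fixpoint var_bound (phi : formula L) : nat :=
  match phi with
  | feq t1 t2 => maxn (tvar_bound t1) (tvar_bound t2)
  | Defs.frel r ts => \max_(i < rar r) tvar_bound (ts i)
  | fneg p => var_bound p
  | fand p q => maxn (var_bound p) (var_bound q)
  | fex n p => maxn n.+1 (var_bound p)
  end.

Fixpoint trename (s : nat -> nat) (t : term L) : term L :=
  match t with
  | tvar n => tvar L (s n)
  | tapp f ts => tapp (fun i => trename s (ts i))
  end.

(* Capture-avoiding: the bound variable becomes [N], above every [s k] with
   [k] possibly free in [p]. *)
Fixpoint rename (s : nat -> nat) (phi : formula L) : formula L :=
  match phi with
  | feq t1 t2 => feq (trename s t1) (trename s t2)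
  | Defs.frel r ts => Defs.frel (fun i => trename s (ts i))
  | fneg p => fneg (rename s p)
  | fand p q => fand (rename s p) (rename s q)
  | fex n p => let N := (\max_(k < var_bound p) s k).+1 in
               fex N (rename (fun k => if k == n then N else s k) p)
  end.

Definition ftrue : formula L := feq (tvar L 0) (tvar L 0).
Definition for_ (p q : formula L) := fneg (fand (fneg p) (fneg q)).
Definition bigand (s : seq (formula L)) := foldr (@fand L) ftrue s.
Definition bigandf (I : Type) (s : seq I) (F : I -> formula L) :=
  foldr (fun i acc => fand (F i) acc) ftrue s.
Definition bigorf (I : Type) (s : seq I) (F : I -> formula L) :=
  foldr (fun i acc => for_ (F i) acc) (fneg ftrue) s.
Definition lit (b : bool) (phi : formula L) := if b then phi else fneg phi.
Definition fexs (xs : seq nat) (phi : formula L) := foldr (@fex L) phi xs.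

Variable M : structure L.
Implicit Types (v w : nat -> M) (phi : formula L).

Lemma teval_ext (t : term L) v w :
  (forall k, k < tvar_bound t -> v k = w k) -> teval v t = teval w t.
Proof.
elim: t => [n|f ts IH] /= vw; first exact: vw.
congr finterp; apply: funext => i; apply: IH => k kt.
by apply: vw; apply: leq_trans kt _; apply: (leq_bigmax i).
Qed.

Lemma sat_ext phi v w :
  (forall k, k < var_bound phi -> v k = w k) -> (sat v phi <-> sat w phi).
Proof.
have below_max a b k : k < a \/ k < b -> k < maxn a b.
  by rewrite leq_max => -[] ->; rewrite ?orbT.
elim: phi v w => [t1 t2|r ts|p IH|p IHp q IHq|n p IH] v w /= vw.
- by rewrite (@teval_ext t1 v w) ?(@teval_ext t2 v w) // => k k_lt;
    apply: vw; apply: below_max; auto.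
- have -> // : (fun i => teval v (ts i)) = (fun i => teval w (ts i)).
  apply: funext => i; apply: teval_ext => k k_lt.
  by apply: vw; apply: leq_trans k_lt _; apply: (leq_bigmax i).
- by rewrite (IH v w).
- by rewrite (IHp v w) ?(IHq v w) // => k k_lt; apply: vw; apply: below_max; auto.
- have IHc c : sat (upd v n c) p <-> sat (upd w n c) p.
    apply: IH => k k_lt; rewrite /upd; case: eqP => // _.
    by apply: vw; apply: below_max; auto.
  by split=> -[c /IHc Hc]; exists c.
Qed.

Lemma sat_ext_impl phi v w :
  (forall k, k < var_bound phi -> v k = w k) -> sat v phi -> sat w phi.
Proof. by move=> /sat_ext[]. Qed.

Lemma teval_rename (t : term L) (s : nat -> nat) v :
  teval v (trename s t) = teval (v \o s) t.
Proof.
elim: t => [n|f ts IH] //=.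
by congr finterp; apply: funext => i; apply: IH.
Qed.

Lemma sat_rename phi (s : nat -> nat) v : sat v (rename s phi) <-> sat (v \o s) phi.
Proof.
elim: phi s v => [t1 t2|r ts|p IH|p IHp q IHq|n p IH] s v /=.
- by rewrite !teval_rename.
- have -> // : (fun i => teval v (trename s (ts i))) = (fun i => teval (v \o s) (ts i)).
  by apply: funext => i; rewrite teval_rename.
- by rewrite IH.
- by rewrite IHp IHq.
- set N := (\max_(k < var_bound p) s k).+1.
  have fresh c : sat (upd v N c \o (fun k => if k == n then N else s k)) p
                 <-> sat (upd (v \o s) n c) p.
    apply: sat_ext => k k_lt; rewrite /= /upd; case: (k =P n) => [_|_]; first by rewrite eqxx.
    case: eqP => // sk_N; have : s k < N by rewrite ltnS (leq_bigmax (Ordinal k_lt)).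
    by rewrite sk_N ltnn.
  by split=> -[c Hc]; exists c; move: Hc; rewrite IH => /fresh.
Qed.

Lemma sat_bigand v (s : seq (formula L)) :
  sat v (bigand s) <-> forall phi, List.In phi s -> sat v phi.
Proof.
elim: s => [|phi s IH] /=; first by split.
rewrite IH; split=> [[sat_phi sat_s] psi [<-|/sat_s]|sat_all] //.
by split=> [|psi psi_s]; apply: sat_all; [left|right].
Qed.

Lemma sat_bigandf (I : eqType) v (s : seq I) (F : I -> formula L) :
  sat v (bigandf s F) <-> {in s, forall i, sat v (F i)}.
Proof.
elim: s => [|i s IH] /=; first by split.
rewrite IH; split=> [[Fi sat_s] j|sat_all].
  by rewrite in_cons => /orP[/eqP->|/sat_s].
by split=> [|j j_s]; apply: sat_all; rewrite in_cons ?eqxx ?j_s ?orbT.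
Qed.

Lemma sat_bigorf (I : eqType) v (s : seq I) (F : I -> formula L) :
  sat v (bigorf s F) <-> exists2 i, i \in s & sat v (F i).
Proof.
elim: s => [|i s IH]; first by split=> [/= []//|[]].
have sat_or : sat v (bigorf (i :: s) F) <-> sat v (F i) \/ sat v (bigorf s F).
  by rewrite /=; tauto.
rewrite sat_or IH; split=> [[Fi|[j j_s Fj]]|[j]].
- by exists i; rewrite ?mem_head.
- by exists j; rewrite // in_cons j_s orbT.
- by rewrite in_cons => /orP[/eqP->|j_s Fj]; [left|right; exists j].
Qed.

Lemma sat_fexs v (xs : seq nat) phi :
  sat v (fexs xs phi) <-> exists2 u, {in [predC xs], u =1 v} & sat u phi.
Proof.
elim: xs v => [|n xs IH] v /=.
  split=> [sat_v|[u uv]]; first by exists v.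
  by apply: sat_ext_impl => k _; rewrite uv.
split=> [[c /IH [u uv sat_u]]|[u uv sat_u]].
  exists u => // t; rewrite !inE negb_or => /andP[tn t_xs].
  by rewrite uv ?inE // /upd (negbTE tn).
exists (u n); apply/IH; exists u => // t; rewrite inE /upd => t_xs.
by case: eqP => [->|tn] //; apply: uv; rewrite !inE negb_or t_xs andbT; apply/eqP.
Qed.

Lemma tval_ord n (a : 'I_n -> M) v (i : 'I_n) : Defs.tval a v i = a i.
Proof. by rewrite /Defs.tval valK. Qed.

Lemma tval_ge n (a : 'I_n -> M) v k : n <= k -> Defs.tval a v k = v k.
Proof. by move=> nk; rewrite /Defs.tval insubN // -leqNgt. Qed.

Lemma tval_lt n (a : 'I_n -> M) v v' k : k < n -> Defs.tval a v k = Defs.tval a v' k.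
Proof. by move=> kn; rewrite (_ : k = Ordinal kn) // !tval_ord. Qed.

Lemma pval_l p q (a : 'I_p -> M) (b : 'I_q -> M) v (j : 'I_p) : pval a b v j = a j.
Proof. exact: tval_ord. Qed.

Lemma pval_r p q (a : 'I_p -> M) (b : 'I_q -> M) v (j : 'I_q) : pval a b v (p + j) = b j.
Proof. by rewrite /pval tval_ge ?leq_addr // addKn tval_ord. Qed.

Lemma sat_lit_bool v (b : bool) phi : sat v (lit b phi) <-> (sat v phi <-> b).
Proof.
by case: b => /=; split=> [H|[H1 H2]]; [split|apply: H2|split=> // /H|move=> /H1].
Qed.

Lemma sat_lit v b phi (P : Prop) : (sat v phi <-> P) -> (sat v (lit b phi) <-> b = asbool P).
Proof. by case: b => /= ->; case: asboolP. Qed.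

End Syntax.

(** * Realizing types in an aleph_1-saturated structure *)

Section Saturation.
Variables (L : signature) (M : structure L).
Hypothesis M_sat : aleph1_saturated M.

Definition to_pv_var (k t : nat) := if t == k then 0 else t.+1.

Definition ex_above (k : nat) (s : list (formula L)) :=
  rename (to_pv_var k) (fexs (iota k.+1 (var_bound (bigand s) - k.+1)) (bigand s)).

Lemma sat_ex_above k s (b : nat -> M) c :
  sat (pv b c) (ex_above k s) <->
  exists u, [/\ u k = c, forall i, i < k -> u i = b i & sat u (bigand s)].
Proof.
rewrite /ex_above sat_rename sat_fexs; set B := var_bound (bigand s).
have in_range t : (t \in iota k.+1 (B - k.+1)) = (k < t < B).
  by rewrite mem_iota; apply/idP/idP => /andP[t_lo t_hi]; apply/andP; split; lia.
split=> [[u u_out sat_u]|[u [uk ub sat_u]]].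
  exists u; split=> //; first by rewrite u_out /= /to_pv_var ?eqxx // inE in_range ltnn.
  move=> i ik; rewrite u_out /= /to_pv_var; last by rewrite inE in_range ltnNge ltnW.
  by rewrite ifN // neq_ltn ik.
exists (fun t => if k < t < B then u t else pv b c (to_pv_var k t)).
  by move=> t; rewrite inE in_range => /negbTE ->.
apply: sat_ext_impl sat_u => t tB; rewrite tB andbT.
case: ltnP => // tk; rewrite /to_pv_var; case: eqP => [->//|/eqP t_k] /=.
by rewrite ub // ltn_neqAle t_k.
Qed.

Variable Sig : formula L -> Prop.

Definition extendable (k : nat) (f : nat -> M) := forall s : list (formula L),
  (forall phi, List.In phi s -> Sig phi) ->
  exists2 u : nat -> M, (forall i, i < k -> u i = f i) & forall phi, List.In phi s -> sat u phi.

(* One use of saturation: the formulas [ex_above k s] form the type of the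
   next variable [k] over the parameters [f 0], ..., [f (k-1)]. *)
Lemma extendable_step k f : extendable k f -> exists c, extendable k.+1 (upd f k c).
Proof.
move=> f_ext.
pose P th := exists2 s, (forall phi, List.In phi s -> Sig phi) & th = ex_above k s.
have [c Pc] : exists c, forall th, P th -> sat (pv f c) th.
  apply: M_sat => ths /In_map_choice [ss -> ss_Sig].
  have concat_Sig phi : List.In phi (List.concat ss) -> Sig phi.
    by move=> /List.in_concat [s [ss_s s_phi]]; apply: ss_Sig s_phi.
  have [u uf sat_u] := f_ext _ concat_Sig.
  exists (u k) => _ /List.in_map_iff [s [<- ss_s]].
  apply/sat_ex_above; exists u; split=> //; apply/sat_bigand => phi s_phi.
  by apply: sat_u; apply/List.in_concat; exists s.
exists c => s s_Sig.
have /sat_ex_above [u [uk ub /sat_bigand sat_u]] := Pc (ex_above k s) (ex_intro2 _ _ s s_Sig erefl).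
exists u => // i; rewrite ltnS leq_eqVlt => /orP [/eqP ->|ik]; first by rewrite /upd eqxx.
by rewrite /upd ifN ?ub // neq_ltn ik.
Qed.

Lemma aleph1_saturated_realize :
  (forall s : list (formula L), (forall phi, List.In phi s -> Sig phi) ->
     exists u : nat -> M, forall phi, List.In phi s -> sat u phi) ->
  exists w : nat -> M, forall phi, Sig phi -> sat w phi.
Proof.
move=> Sig_fin; have [u0 _] := Sig_fin nil (fun _ => False_ind _).
have inhM : inhabited M := inhabits (u0 0).
pose next k f := epsilon inhM (fun c => extendable k.+1 (upd f k c)).
pose F := fix F k := if k is k'.+1 then upd (F k') k' (next k' (F k')) else u0.
have F_ext k : extendable k (F k).
  elim: k => [|k IH]; first by move=> s /Sig_fin [u sat_u]; exists u.
  exact: (epsilon_spec inhM _ (extendable_step IH)).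
have F_stable k t : t < k -> F k t = F t.+1 t.
  elim: k => [//|k IH]; rewrite ltnS leq_eqVlt => /orP [/eqP ->//|tk].
  by rewrite /= /upd ifN ?IH // neq_ltn tk.
exists (fun t => F t.+1 t) => phi Sig_phi.
have phi_Sig psi : List.In psi [:: phi] -> Sig psi by move=> [<-|[]].
have [u uF sat_u] := F_ext (var_bound phi) _ phi_Sig.
by apply: sat_ext_impl (sat_u phi (List.in_eq _ _)) => t tB; rewrite uF // F_stable.
Qed.

End Saturation.

(** * Back-and-forth in (Q,<) and the random graph *)

Section BinaryStructures.
Variable O : structure binsig.

Definition brel (x y : O) : Prop :=
  @rinterp binsig O tt (fun i : 'I_2 => if val i == 0 then x else y).

Lemma rinterp_brel r (a : 'I_2 -> O) : @rinterp binsig O r a <-> brel (a ord0) (a ord_max).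
Proof.
case: r; suff -> : a = (fun i : 'I_2 => if val i == 0 then a ord0 else a ord_max) by [].
by apply: funext => -[[|[|//]] i2] /=; congr a; apply: val_inj.
Qed.

Lemma binsig_term_var (t : term binsig) : exists n, t = tvar binsig n.
Proof. by case: t => [n|[]]; exists n. Qed.

Definition partial_iso (l : list (O * O)) := forall p p', List.In p l -> List.In p' l ->
  (p.1 = p'.1 <-> p.2 = p'.2) /\ (brel p.1 p'.1 <-> brel p.2 p'.2).

(* Only the forth step is required: [same_qf_type] is symmetric, so it also
   gives the back step of the back-and-forth argument. *)
Definition extension_property := forall l c, partial_iso l -> exists d, partial_iso ((c, d) :: l).

Lemma partial_iso_dup l p : List.In p l -> partial_iso l -> partial_iso (p :: l).
Proof. by move=> l_p iso_l q q' [<-|l_q] [<-|l_q']; apply: iso_l. Qed.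

Lemma partial_iso_cons l c d : partial_iso l ->
  (forall q, List.In q l -> [/\ c = q.1 <-> d = q.2, brel c q.1 <-> brel d q.2
                              & brel q.1 c <-> brel q.2 d]) ->
  (brel c c <-> brel d d) -> partial_iso ((c, d) :: l).
Proof.
move=> iso_l cd_l cd q q' [<-|l_q] [<-|l_q'] //=; last exact: iso_l.
  by have [] := cd_l q' l_q'.
have [eq_cd ? ?] := cd_l q l_q; split=> //.
by split=> E; apply/esym; apply/eq_cd/esym.
Qed.

Definition same_qf_type (v w : nat -> O) n := forall k l, k < n -> l < n ->
  (v k = v l <-> w k = w l) /\ (brel (v k) (v l) <-> brel (w k) (w l)).

Lemma same_qf_type_le v w n n' : n' <= n -> same_qf_type v w n -> same_qf_type v w n'.
Proof. by move=> n'n vw k l kn' ln'; apply: vw; apply: leq_trans n'n. Qed.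

Lemma same_qf_type_sym v w n : same_qf_type v w n -> same_qf_type w v n.
Proof. by move=> vw k l kn ln; have [? ?] := vw k l kn ln; split; apply: iff_sym. Qed.

Hypothesis O_ext : extension_property.

Lemma same_qf_type_upd v w n m c : same_qf_type v w n -> m < n ->
  exists d, same_qf_type (upd v m c) (upd w m d) n.
Proof.
move=> vw mn; pose l := List.map (fun k => (v k, w k)) (List.seq 0 n).
have [|d iso_cdl] := @O_ext l c.
  move=> p p' /List.in_map_iff [k [<- /List.in_seq k_n]].
  move=> /List.in_map_iff [k' [<- /List.in_seq k'_n]].
  by apply: vw; lia.
have in_cdl k : k < n -> List.In (upd v m c k, upd w m d k) ((c, d) :: l).
  move=> kn; rewrite /upd; case: eqP => _; first by left.
  by right; apply/List.in_map_iff; exists k; split=> //; apply/List.in_seq; lia.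
by exists d => k k' kn k'n; exact: iso_cdl (in_cdl k kn) (in_cdl k' k'n).
Qed.

Lemma sat_same_qf_type phi v w :
  same_qf_type v w (var_bound phi) -> (sat v phi <-> sat w phi).
Proof.
elim: phi v w => [t1 t2|r ts|p IH|p IHp q IHq|n p IH] v w /= vw.
- have [n1 E1] := binsig_term_var t1; have [n2 E2] := binsig_term_var t2; subst t1 t2.
  by apply: (proj1 (vw n1 n2 _ _)) => /=; lia.
- rewrite !rinterp_brel.
  have [n1 E1] := binsig_term_var (ts ord0); have [n2 E2] := binsig_term_var (ts ord_max).
  rewrite E1 E2 /=; apply: (proj2 (vw n1 n2 _ _)).
    by apply: leq_trans (leq_bigmax ord0); rewrite E1.
  by apply: leq_trans (leq_bigmax ord_max); rewrite E2.
- by rewrite (IH v w).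
- by rewrite (IHp v w) ?(IHq v w) //; apply: same_qf_type_le vw; rewrite leq_max leqnn ?orbT.
- have pB : var_bound p <= maxn n.+1 (var_bound p) by rewrite leq_max leqnn orbT.
  have nB : n < maxn n.+1 (var_bound p) by rewrite leq_max ltnSn.
  split=> -[c sat_c].
    have [d vw_d] := same_qf_type_upd c vw nB.
    by exists d; rewrite -(IH (upd v n c)) //; apply: same_qf_type_le vw_d.
  have [d wv_d] := same_qf_type_upd c (same_qf_type_sym vw) nB.
  by exists d; rewrite (IH _ (upd w n c)) //; apply: same_qf_type_le (same_qf_type_sym wv_d).
Qed.

End BinaryStructures.

Lemma brel_QLt (x y : QLt) : brel x y <-> (x < y)%R.
Proof. by []. Qed.

Lemma brel_RandomGraph (x y : RandomGraph) : brel x y <-> rado_edge x y.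
Proof. by []. Qed.

Local Open Scope ring_scope.

Lemma exists_between (R : realFieldType) (lo hi : seq R) :
  {in lo & hi, forall l h, l < h} ->
  exists d, {in lo, forall l, l < d} /\ {in hi, forall h, d < h}.
Proof.
have le_max x0 l : l \in lo -> l <= \big[Order.max/x0]_(l' <- lo) l'.
  by move=> l_lo; exact: (le_bigmax_seq x0 l xpredT (fun l' => l') l_lo).
elim: hi => [|h hi IH] lo_hi.
  by exists (\big[Order.max/0]_(l <- lo) l + 1); split=> // l /(le_max 0); lra.
have [l l_lo h' h'_hi|d [lo_d d_hi]] := IH; first by apply: lo_hi; rewrite // in_cons h'_hi orbT.
case: (ltP d h) => [dh|hd].
  by exists d; split=> // h'; rewrite in_cons => /orP[/eqP->|/d_hi].
set m := \big[Order.max/(h - 1)]_(l <- lo) l.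
have mh : m < h.
  rewrite /m big_seq; apply: bigmax_lt => [|l l_lo]; first lra.
  by apply: lo_hi; rewrite ?mem_head.
exists ((m + h) / 2); split=> [l /(le_max (h - 1))|h']; first by rewrite -/m; lra.
rewrite in_cons => /orP[/eqP->|/d_hi]; lra.
Qed.

Lemma same_side (d0 : Order.disp_t) (T : orderType d0) (x c y d : T) :
  x != c -> (x < c -> y < d)%O -> (c < x -> d < y)%O ->
  [/\ c = x <-> d = y, (c < x <-> d < y)%O & (x < c <-> y < d)%O].
Proof.
case: (ltgtP x c) => // [xc|cx] _ left right.
- have yd := left isT; rewrite (lt_gtF yd).
  by split=> //; split=> // E; [move: xc|move: yd]; rewrite E ltxx.
- have dy := right isT; rewrite (lt_gtF dy).
  by split=> //; split=> // E; [move: cx|move: dy]; rewrite E ltxx.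
Qed.

Lemma QLt_extension_property : extension_property QLt.
Proof.
move=> l c iso_l.
case: (pselect (exists2 p, List.In p l & p.1 = c)) => [[[c' d] l_p /= <-]|c_new].
  by exists d; apply: partial_iso_dup.
pose lo := [seq q.2 | q <- l & q.1 < c]; pose hi := [seq q.2 | q <- l & c < q.1].
have [|d [lo_d d_hi]] := exists_between (lo := lo) (hi := hi).
  move=> _ _ /mapP [q + ->] /mapP [q' + ->]; rewrite !mem_filter.
  move=> /andP [qc /In_mem l_q] /andP [cq' /In_mem l_q'].
  by apply/brel_QLt/(proj2 (iso_l _ _ l_q l_q')); apply: lt_trans cq'.
exists d; apply: partial_iso_cons => // [q l_q|]; last by rewrite !brel_QLt !ltxx.
have q_c : q.1 != c by apply/eqP => E; apply: c_new; exists q.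
have q_lo : q.1 < c -> q.2 \in lo.
  by move=> qc; apply: map_f; rewrite mem_filter qc; apply/In_mem.
have q_hi : c < q.1 -> q.2 \in hi.
  by move=> cq; apply: map_f; rewrite mem_filter cq; apply/In_mem.
exact: same_side q_c (fun qc => lo_d _ (q_lo qc)) (fun cq => d_hi _ (q_hi cq)).
Qed.

Close Scope ring_scope.

Fixpoint rado_witness (U : nat -> bool) (K s : nat) : nat :=
  if s is s'.+1 then
    if U s' then Nat.setbit (rado_witness U K s') s' else rado_witness U K s'
  else Nat.pow 2 K.

Lemma testbit_rado_witness U K s x : s <= K ->
  Nat.testbit (rado_witness U K s) x = (x == K) || (x < s) && U x.
Proof.
have eqbE a b : (a =? b) = (a == b) by case: Nat.eqb_spec => [->|/eqP/negbTE->]; rewrite ?eqxx.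
elim: s => [|s IH] sK /=; first by rewrite Nat.pow2_bits_eqb eqbE eq_sym orbF.
rewrite [x < s.+1]ltnS; case: ifP => Us; rewrite ?Nat.setbit_eqb (IH (ltnW sK)) ?eqbE;
  by case: (ltngtP x s) => [_|_|->] //=; rewrite Us ?orbT.
Qed.

Lemma testbit_small a n : a < Nat.pow 2 n -> Nat.testbit a n = false.
Proof.
case: a => [|a] a_lt; first exact: Nat.bits_0.
by apply: Nat.bits_above_log2; apply/Nat.log2_lt_pow2; [lia|apply/ssrnat.ltP].
Qed.

Lemma lt_pow2 n : n < Nat.pow 2 n.
Proof. by apply/ssrnat.ltP; apply: Nat.pow_gt_lin_r. Qed.

Lemma rado_extension K (U : nat -> bool) :
  exists2 d, K <= d & forall x, x < K -> (rado_edge x d <-> U x).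
Proof.
pose d := rado_witness U K K.
have dK : Nat.testbit d K by rewrite testbit_rado_witness // eqxx.
have Kd : K < d.
  case: (ltnP d (Nat.pow 2 K)) => [small|big]; first by rewrite testbit_small in dK.
  exact: leq_trans (lt_pow2 K) big.
exists d => [|x xK]; first exact: ltnW.
have xd : x < d := ltn_trans xK Kd.
rewrite /rado_edge testbit_rado_witness // xK (testbit_small (ltn_trans xd (lt_pow2 d))).
rewrite (ltn_eqF xK) /=; split=> [[_ [|//]]//|Ux]; split; last by left.
by move=> xd_eq; move: xd; rewrite xd_eq ltnn.
Qed.

Lemma rado_edge_sym x y : rado_edge x y <-> rado_edge y x.
Proof. by rewrite /rado_edge; split=> -[xy bits]; split; [auto|tauto|auto|tauto]. Qed.

Lemma RandomGraph_extension_property : extension_property RandomGraph.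
Proof.
move=> l c iso_l.
case: (pselect (exists2 p, List.In p l & p.1 = c)) => [[[c' d] l_p /= <-]|c_new].
  by exists d; apply: partial_iso_dup.
pose K := foldr (fun q acc => maxn (q.2 : nat).+1 acc) 0 l.
have lt_K q : List.In q l -> (q.2 : nat) < K.
  rewrite /K; elim: (l) => [//|q' l' IH] /= [<-|/IH]; rewrite leq_max ?leqnn // => ->.
  by rewrite orbT.
pose U y := asbool (exists2 q, List.In q l & q.2 = y /\ rado_edge c q.1).
have [d Kd dU] := rado_extension K U.
exists d; apply: partial_iso_cons => // [q l_q|]; last by rewrite !brel_RandomGraph; split=> -[].
have qK := lt_K q l_q.
have d_q : d <> q.2 by move=> E; move: qK; rewrite -E ltnNge Kd.
have c_q : c <> q.1 by move=> E; apply: c_new; exists q.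
have edge_iff : rado_edge c q.1 <-> rado_edge d q.2.
  rewrite [rado_edge d _]rado_edge_sym (dU _ qK); split=> [cq|/asboolP[q' l_q' [E cq']]].
    by apply/asboolP; exists q.
  by have [[_ /(_ E) <-] _] := iso_l q' q l_q' l_q.
split; [by split=> E; [case: c_q|case: d_q] | exact: edge_iff |].
apply: (iff_trans (rado_edge_sym _ _)); apply: (iff_trans edge_iff); exact: rado_edge_sym.
Qed.

(** * Trace definability from a definable relation *)

(* [rho] defines [R] on the [m]-tuples [tau x]: the pair [(x, y)] is
   represented by variables [0 .. m-1] (for [x]) and [m .. 2m-1] (for [y]). *)
Definition tuple_defines L (M : structure L) (T : Type) m (tau : T -> 'I_m -> M)
    (rho : formula L) (R : T -> T -> Prop) :=
  forall x y (u : nat -> M), (forall j : 'I_m, u j = tau x j) ->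
    (forall j : 'I_m, u (m + j) = tau y j) -> (sat u rho <-> R x y).

Section TupleDefinability.
Variables (L : signature) (M : structure L) (T : Type) (m : nat) (tau : T -> 'I_m -> M).

Lemma tuple_defines_pval rho R (d : M) x y : tuple_defines tau rho R ->
  (sat (pval (tau x) (tau y) (fun _ => d)) rho <-> R x y).
Proof. by move=> rho_R; apply: rho_R => j; rewrite ?pval_l ?pval_r. Qed.

Lemma tuple_defines_congr rho R (d : M) x y : tuple_defines tau rho R ->
  tau x = tau y -> (forall z, R z x <-> R z y) /\ (forall z, R x z <-> R y z).
Proof.
move=> rho_R tau_xy; split=> z; rewrite -!(tuple_defines_pval d _ _ rho_R) tau_xy //.
Qed.

Definition tuple_eq_formula := bigandf (enum 'I_m) (fun j => feq (tvar L j) (tvar L (m + j))).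

Lemma tuple_defines_eq : (forall x y, (forall j, tau x j = tau y j) -> x = y) ->
  tuple_defines tau tuple_eq_formula (@eq T).
Proof.
move=> tau_inj x y u ux uy; rewrite sat_bigandf; split=> [u_eq|xy j _ /=].
  by apply: tau_inj => j; rewrite -ux -uy; apply: (u_eq j); rewrite mem_enum.
by rewrite ux uy xy.
Qed.

Definition swap_halves (t : nat) := if t < m then m + t else if t < m + m then t - m else t.

Lemma tuple_defines_swap rho R : tuple_defines tau rho R ->
  tuple_defines tau (rename swap_halves rho) (fun x y => R y x).
Proof.
move=> rho_R x y u ux uy; rewrite sat_rename; apply: rho_R => j /=.
  by rewrite /swap_halves ltn_ord uy.
by rewrite /swap_halves ltnNge leq_addr /= ltn_add2l ltn_ord addKn ux.
Qed.

End TupleDefinability.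

Section TraceDefinability.
Variables (L : signature) (M : structure L) (O : structure binsig).
Hypothesis O_ext : extension_property O.
Variables (m : nat) (tau : O -> 'I_m -> M) (m0 : M).
Hypothesis tau_inj : forall x y : O, (forall j, tau x j = tau y j) -> x = y.
Variable rho : formula L.
Hypothesis rho_tau : tuple_defines tau rho (@brel O).

Section DefinableSet.
Variables (n : nat) (v0 : nat -> O).
Local Notation I := ('I_n * 'I_m)%type.

Definition ovals (a : 'I_n -> O) := Defs.tval (fun i : 'I_#|'I_n| => a (enum_val i)) v0.

Definition trace_tuple (a : 'I_n -> O) : I -> M := fun p => tau (a p.1) p.2.

(* Coordinate [j] of the value of the [O]-variable [k] is held by the
   [M]-variable [mvar k j]: the tuple comes first, as [DefinableI] requires,
   the parameters [v0] follow in blocks of [m]. *)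
Definition mvar (k j : nat) : nat :=
  match insub k : option 'I_#|'I_n|, insub j : option 'I_m with
  | Some k', Some j' => enum_rank ((enum_val k', j') : I)
  | Some _, None => 0
  | None, _ => #|{: I}| + k * m + j
  end.

Definition mparam (t : nat) : M :=
  if insub ((t - #|{: I}|) %% m) is Some j then tau (v0 ((t - #|{: I}|) %/ m)) j else m0.

Definition mvals (y : I -> M) := Defs.tval (fun i : 'I_#|{: I}| => y (enum_val i)) mparam.

Lemma mvals_mvar a k (j : 'I_m) : mvals (trace_tuple a) (mvar k j) = tau (ovals a k) j.
Proof.
case: (ltnP k #|'I_n|) => kn.
  by rewrite (_ : k = Ordinal kn) // /mvar /ovals !valK tval_ord /mvals tval_ord enum_rankK.
rewrite /mvar insubN -?leqNgt // /mvals /ovals (tval_ge _ _ kn).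
rewrite tval_ge -?addnA ?leq_addr // /mparam addKn.
have m_pos : 0 < m by apply: leq_ltn_trans (ltn_ord j).
by rewrite modnMDl modn_small // divnMDl // divn_small // addn0 valK.
Qed.

Definition eq_formula (k l : nat) :=
  bigandf (enum 'I_m) (fun j => feq (tvar L (mvar k j)) (tvar L (mvar l j))).

Definition brel_formula (k l : nat) :=
  rename (fun t => if t < m then mvar k t else mvar l (t - m)) rho.

Lemma sat_eq_formula a k l :
  sat (mvals (trace_tuple a)) (eq_formula k l) <-> ovals a k = ovals a l.
Proof.
rewrite sat_bigandf; split=> [tau_eq|E j _ /=]; last by rewrite !mvals_mvar E.
by apply: tau_inj => j; rewrite -!mvals_mvar; apply: (tau_eq j); rewrite mem_enum.
Qed.

Lemma sat_brel_formula a k l :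
  sat (mvals (trace_tuple a)) (brel_formula k l) <-> brel (ovals a k) (ovals a l).
Proof.
rewrite sat_rename; apply: rho_tau => j /=; first by rewrite ltn_ord mvals_mvar.
by rewrite ltnNge leq_addr /= addKn mvals_mvar.
Qed.

Variable B : nat.

Definition qf_type (a : 'I_n -> O) : {ffun 'I_B * 'I_B -> bool * bool} :=
  [ffun p : 'I_B * 'I_B =>
     (asbool (ovals a p.1 = ovals a p.2), asbool (brel (ovals a p.1) (ovals a p.2)))].

Definition qf_type_formula (T : {ffun 'I_B * 'I_B -> bool * bool}) :=
  bigandf (enum {: 'I_B * 'I_B}) (fun p : 'I_B * 'I_B =>
    fand (lit (T p).1 (eq_formula p.1 p.2)) (lit (T p).2 (brel_formula p.1 p.2))).

Lemma sat_qf_type_formula a T :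
  sat (mvals (trace_tuple a)) (qf_type_formula T) <-> T = qf_type a.
Proof.
have sat_p p : sat (mvals (trace_tuple a)) (fand (lit (T p).1 (eq_formula p.1 p.2))
                                                 (lit (T p).2 (brel_formula p.1 p.2)))
               <-> T p = qf_type a p.
  rewrite /= (sat_lit _ (sat_eq_formula a _ _)) (sat_lit _ (sat_brel_formula a _ _)) ffunE.
  by case: (T p) => b1 b2 /=; split=> [[-> ->]|[-> ->]].
rewrite sat_bigandf; split=> [T_a|E p _]; last by apply/sat_p; rewrite E.
by apply/ffunP => p; apply/sat_p/T_a; rewrite mem_enum.
Qed.

Lemma same_qf_type_of_qf_type a a' :
  qf_type a = qf_type a' -> same_qf_type (ovals a) (ovals a') B.
Proof.
move=> /ffunP types k l kB lB.
have := types (Ordinal kB, Ordinal lB); rewrite !ffunE => -[eq_eq brel_eq].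
by split; apply: asbool_eq_equiv.
Qed.

End DefinableSet.

Lemma trace_definable_set n (X : ('I_n -> O) -> Prop) (chi : formula binsig) v0 :
  (forall a, X a <-> sat (ovals v0 a) chi) ->
  exists Y : ('I_n * 'I_m -> M) -> Prop,
    DefinableI Y /\ forall a, X a <-> Y (trace_tuple a).
Proof.
move=> X_chi; pose B := var_bound chi.
pose realized T := asbool (exists2 a, X a & qf_type v0 B a = T).
pose psi := bigorf (enum {: {ffun 'I_B * 'I_B -> bool * bool}})
  (fun T => if realized T then qf_type_formula n T else fneg (ftrue L)).
exists (fun y => sat (mvals v0 y) psi); split; first by exists psi, (mparam n v0).
move=> a; rewrite sat_bigorf; split=> [Xa|[T _]].
  exists (qf_type v0 B a); first by rewrite mem_enum.
  by rewrite /realized; case: asboolP => [_|[]]; [apply/sat_qf_type_formula|exists a].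
rewrite /realized; case: asboolP => [[a' Xa' <-]|_] /=; last by case.
move=> /sat_qf_type_formula /same_qf_type_of_qf_type same_a.
by rewrite X_chi -(sat_same_qf_type O_ext same_a) -X_chi.
Qed.

Lemma trace_defines_via_brel : @trace_defines_via L binsig M O m tau.
Proof. by split=> // n X [chi [v0 X_chi]]; apply: (trace_definable_set (v0 := v0)). Qed.

End TraceDefinability.

Lemma trace_defines_via_brel_formula L (M : structure L) (O : structure binsig) (o0 : O)
    m (tau : O -> 'I_m -> M) :
  @trace_defines_via L binsig M O m tau ->
  exists (phi : formula L) (v : nat -> M),
    forall x y, sat (pval (tau x) (tau y) v) phi <-> brel x y.
Proof.
case=> _ /(_ 2 (fun a => brel (a ord0) (a ord_max))) [].
  exists (@Defs.frel binsig tt (fun i : 'I_2 => tvar binsig (enum_rank i))), (fun _ => o0).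
  by move=> a; rewrite /= rinterp_brel /= !tval_ord !enum_rankK.
move=> Y [[psi [vY Y_psi]] brel_Y].
pose I := ('I_2 * 'I_m)%type.
(* Coordinate [(i, j)] of [Y] becomes variable [j] or [m + j] of [pval],
   the parameters of [psi] are moved above [2 * m]. *)
pose s (t : nat) : nat := if insub t : option 'I_#|{: I}| is Some t' then
    let: (i, j) := enum_val t' in if i == ord0 then j : nat else m + j
  else 2 * m + t.
exists (rename s psi), (fun t => vY (t - 2 * m)) => x y.
pose a (i : 'I_2) := if i == ord0 then x else y.
apply: (iff_trans _ (iff_sym (brel_Y a))); rewrite Y_psi sat_rename; apply: sat_ext => t _ /=.
rewrite /s; case: insubP => [t' _ <-|t_big] /=.
  rewrite tval_ord; case: (enum_val t') => i j /=; rewrite /a /pval.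
  case: eqP => _; first by rewrite tval_ord.
  by rewrite tval_ge ?leq_addr // (_ : m + j - m = j) ?tval_ord //; lia.
rewrite tval_ge; last by rewrite leqNgt.
by rewrite /pval tval_ge ?tval_ge; [congr vY| |]; lia.
Qed.

Lemma trace_defines_unstable L (M : structure L) : trace_defines M QLt -> unstable M.
Proof.
case=> m [tau /(trace_defines_via_brel_formula (0%R : QLt)) [phi [v phi_lt]]].
exists phi, m, m => N; exists v, (fun i => tau ((i : nat)%:R)%R), (fun j => tau ((j : nat)%:R)%R).
by move=> i j; rewrite phi_lt brel_QLt ltr_nat.
Qed.

Lemma trace_defines_has_IP L (M : structure L) : trace_defines M RandomGraph -> has_IP M.
Proof.
case=> m [tau /(trace_defines_via_brel_formula (0 : RandomGraph)) [phi [v phi_edge]]].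
exists phi, m, m => N.
have /fin_all_exists [d dS] : forall S : {set 'I_N}, exists d : nat,
    forall x, x < N -> (rado_edge x d <-> x \in [seq val i | i in S]).
  by move=> S; have [d _ dS] := rado_extension N (fun x => x \in [seq val i | i in S]); exists d.
exists v, (fun i => tau (i : nat)), (fun S => tau (d S)) => i S.
by rewrite phi_edge brel_RandomGraph dS // (mem_map val_inj) mem_enum.
Qed.

(** * Order property and independence property *)

Section PatternRealization.
Variables (L : signature) (M : structure L).
Hypothesis M_sat : aleph1_saturated M.
Variables (phi : formula L) (p q : nat) (Idx : countType) (C : Idx -> Idx -> bool).
Hypothesis C_fin : forall F : seq Idx,
  exists (v : nat -> M) (a : Idx -> 'I_p -> M) (b : Idx -> 'I_q -> M),
    {in F &, forall x y, sat (pval (a x) (b y) v) phi <-> C x y}.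

Definition width := maxn (var_bound phi) (p + q).

(* Each index [x] owns a block of [width] variables; the variables
   [j >= p + q] of [phi] are the parameters, shared by all blocks. *)
Definition block_var (x : Idx) (j : nat) :=
  if p + q <= j then j else width + pickle x * width + j.

Definition pattern_rename (x y : Idx) (t : nat) :=
  if t < p then block_var x t else block_var y t.

Definition pair_rename (t : nat) := if t < p then t else if t < p + q then width + t else t.

Lemma var_bound_width : var_bound phi <= width.
Proof. exact: leq_maxl. Qed.

Definition glue (v : nat -> M) (a : Idx -> 'I_p -> M) (b : Idx -> 'I_q -> M) (t : nat) :=
  if t < width then v t else
    let s := t - width in
    if unpickle (s %/ width) is Some z then
      if s %% width < p then Defs.tval (a z) (fun _ => v 0) (s %% width)
      else Defs.tval (b z) (fun _ => v 0) (s %% width - p)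
    else v 0.

Lemma sat_glue v a b x y :
  sat (glue v a b) (rename (pattern_rename x y) phi) <-> sat (pval (a x) (b y) v) phi.
Proof.
rewrite sat_rename; apply: sat_ext => t t_phi /=.
have t_w : t < width := leq_trans t_phi var_bound_width.
have w_pos : 0 < width by case: (width) t_w.
have glue_block z : t < p + q -> glue v a b (block_var z t) =
    if t < p then Defs.tval (a z) (fun _ => v 0) t else Defs.tval (b z) (fun _ => v 0) (t - p).
  move=> t_pq; rewrite /block_var ifN -?ltnNge // /glue ltnNge -addnA leq_addr /= addKn.
  by rewrite divnMDl // divn_small // addn0 pickleK modnMDl modn_small.
rewrite /pattern_rename /pval; case: ltnP => tp.
  by rewrite glue_block ?tp; [apply: tval_lt | apply: leq_trans tp (leq_addr _ _)].
rewrite (tval_ge _ _ tp); case: (ltnP t (p + q)) => tpq.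
  by rewrite glue_block // ltnNge tp /=; apply: tval_lt; lia.
by rewrite /block_var tpq /glue t_w tval_ge; [congr v|]; lia.
Qed.

Definition pattern_formula (xy : Idx * Idx) :=
  lit (C xy.1 xy.2) (rename (pattern_rename xy.1 xy.2) phi).

Lemma pattern_realized : exists w : nat -> M, forall xy, sat w (pattern_formula xy).
Proof.
have [|w w_sat] :=
  aleph1_saturated_realize M_sat (Sig := fun f => exists xy, f = pattern_formula xy).
  move=> s s_Sig; have [|xys -> _] := @In_map_choice _ _ pattern_formula (fun _ => True) s.
    by move=> f /s_Sig [xy ->]; exists xy.
  have [v [a [b abC]]] := C_fin (List.map fst xys ++ List.map snd xys).
  exists (glue v a b) => _ /List.in_map_iff [[x y] [<- xys_xy]].
  rewrite /pattern_formula sat_lit_bool sat_glue /=.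
  apply: abC; rewrite mem_cat; apply/orP; [left|right];
    by apply/In_mem/List.in_map_iff; exists (x, y).
by exists w => xy; apply: w_sat; exists xy.
Qed.

Lemma pattern_tuple_defines :
  exists tau : Idx -> 'I_width -> M, tuple_defines tau (rename pair_rename phi) C.
Proof.
have [w w_sat] := pattern_realized.
exists (fun x j => w (block_var x j)) => x y u ux uy.
have := w_sat (x, y); rewrite sat_lit_bool /= => <-; rewrite sat_rename sat_rename.
apply: sat_ext => t t_phi /=; have t_w := leq_trans t_phi var_bound_width.
rewrite /pair_rename /pattern_rename; case: ltnP => tp; first by rewrite (ux (Ordinal t_w)).
case: ltnP => tpq; first by rewrite (uy (Ordinal t_w)).
by rewrite (ux (Ordinal t_w)) /= /block_var tpq.
Qed.

End PatternRealization.

Lemma count_lt_subpred (T : eqType) (a1 a2 : pred T) (s : seq T) z :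
  subpred a1 a2 -> z \in s -> a2 z -> ~~ a1 z -> count a1 s < count a2 s.
Proof.
move=> a12; elim: s => [//|r s IH]; rewrite in_cons => /orP [/eqP <-|zs] a2z a1z /=.
  by rewrite a2z (negbTE a1z) add1n ltnS sub_count.
have := IH zs a2z a1z; case: (boolP (a1 r)) => [a1r|_] lt; first by rewrite (a12 _ a1r) ltn_add2l.
by rewrite add0n (leq_trans lt) ?leq_addl.
Qed.

Lemma count_lt_rank (d : Order.disp_t) (T : orderType d) (F : seq T) x y : x \in F -> y \in F ->
  (count (< x)%O F < count (< y)%O F) = (x < y)%O.
Proof.
move=> xF yF; case: (ltP x y) => xy.
  apply: (count_lt_subpred (z := x)); rewrite /= ?ltxx //.
  by move=> r /= /lt_trans; apply.
by apply/negbTE; rewrite -leqNgt; apply: sub_count => r /= /lt_le_trans; apply.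
Qed.

Section Patterns.
Variables (L : signature) (M : structure L) (phi : formula L) (p q : nat).

Lemma unstable_pattern :
  (forall N : nat, exists (v : nat -> M) (a : 'I_N -> 'I_p -> M) (b : 'I_N -> 'I_q -> M),
      forall i j : 'I_N, sat (pval (a i) (b j) v) phi <-> (i < j)%N) ->
  forall F : seq rat, exists (v : nat -> M) (a : rat -> 'I_p -> M) (b : rat -> 'I_q -> M),
    {in F &, forall x y, sat (pval (a x) (b y) v) phi <-> (x < y)%R}.
Proof.
move=> order F; have [v [a [b ab_lt]]] := order (size F).+1.
pose rank (x : rat) : 'I_(size F).+1 := inord (count (< x)%O F).
exists v, (fun x => a (rank x)), (fun y => b (rank y)) => x y xF yF.
by rewrite ab_lt /rank !inordK ?ltnS ?count_size // count_lt_rank.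
Qed.

Lemma has_IP_pattern :
  (forall N : nat, exists (v : nat -> M) (a : 'I_N -> 'I_p -> M) (b : {set 'I_N} -> 'I_q -> M),
      forall (i : 'I_N) (S : {set 'I_N}), sat (pval (a i) (b S) v) phi <-> i \in S) ->
  forall F : seq nat, exists (v : nat -> M) (a : nat -> 'I_p -> M) (b : nat -> 'I_q -> M),
    {in F &, forall x y, sat (pval (a x) (b y) v) phi <-> Nat.testbit y x}.
Proof.
move=> indep F; have [v [a [b ab_in]]] := indep (size F).+1.
exists v, (fun x => a (inord (index x F))).
exists (fun y => b [set i : 'I_(size F).+1 | Nat.testbit y (nth 0 F i)]) => x y xF yF.
by rewrite ab_in inE inordK ?nth_index // ltnS ltnW // index_mem.
Qed.

End Patterns.

Lemma unstable_trace_defines L (M : structure L) :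
  aleph1_saturated M -> unstable M -> trace_defines M QLt.
Proof.
move=> M_sat [phi [p [q order]]]; have [v _] := order 0.
have [tau rho_lt] := pattern_tuple_defines M_sat (C := fun x y : rat => (x < y)%R)
  (unstable_pattern order).
have tau_inj x y : (forall j, tau x j = tau y j) -> x = y.
  move=> /funext /(tuple_defines_congr (v 0) rho_lt) [/(_ x) xx_xy /(_ x) xx_yx].
  by case: (ltgtP x y) => // [/xx_xy|/xx_yx]; rewrite ltxx.
exists (width phi p q), tau.
exact: (trace_defines_via_brel QLt_extension_property (v 0) tau_inj rho_lt).
Qed.

Lemma has_IP_trace_defines L (M : structure L) :
  aleph1_saturated M -> has_IP M -> trace_defines M RandomGraph.
Proof.
move=> M_sat [phi [p [q indep]]]; have [v _] := indep 0.
have [tau rho_bit] := pattern_tuple_defines M_sat (C := fun x y : nat => Nat.testbit y x)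
  (has_IP_pattern indep).
have tau_inj x y : (forall j, tau x j = tau y j) -> x = y.
  move=> /funext /(tuple_defines_congr (v 0) rho_bit) [bits _].
  by apply: Nat.bits_inj => z; apply/idP/idP => /bits.
pose K := width phi p q; pose rho := rename (pair_rename phi p q) phi.
pose edge := fand (fneg (tuple_eq_formula L K)) (for_ rho (rename (swap_halves K) rho)).
have edge_tau : tuple_defines tau edge (@brel RandomGraph).
  move=> x y u ux uy; rewrite /= (tuple_defines_eq tau_inj ux uy) (rho_bit x y u ux uy).
  rewrite (tuple_defines_swap rho_bit ux uy) /rado_edge.
  by case: (Nat.testbit y x); case: (Nat.testbit x y); split; tauto.
exists K, tau.
exact: (trace_defines_via_brel RandomGraph_extension_property (v 0) tau_inj edge_tau).
Qed.

Theorem proposition4p8 (L : signature) (M : structure L) :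
  aleph1_saturated M ->
  (unstable M <-> trace_defines M QLt) /\
  (has_IP M <-> trace_defines M RandomGraph).
Proof.
move=> M_sat; split; split.
- exact: unstable_trace_defines.
- exact: trace_defines_unstable.
- exact: has_IP_trace_defines.
- exact: trace_defines_has_IP.
Qed.
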